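(* Let $G$ be a finite group. Then: (a) $\omega(\mathrm{EPow}(G))$ is the order of the largest cyclic subgroup of $G$; (b) $\omega(\mathrm{Com}(G))$ is the order of the largest abelian subgroup of $G$; (c) $\omega(\mathrm{DCom}(G))$ is the order of the largest subgroup of $G$ whose inverse image in any central extension of $G$ is abelian.
   Context: $\omega(\Gamma)$ is the clique number (size of a largest set of pairwise adjacent vertices). Graphs have vertex set $G$. $\mathrm{EPow}(G)$: distinct $x,y$ adjacent iff $\langle x,y\rangle$ is cyclic. $\mathrm{Com}(G)$: adjacent iff $xy=yx$. $\mathrm{DCom}(G)$: adjacent iff for every group $H$ with a central subgroup $Z$ and $H/Z\cong G$ (a central extension of $G$), any preimages of $x$ and $y$ in $H$ commute. *)

From mathcomp Require Import all_boot all_fingroup all_solvable.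
Set Implicit Arguments. Unset Strict Implicit. Unset Printing Implicit Defensive.
Local Open Scope group_scope.

(* Graphs on the vertex set G (a subgroup of gT); adjacency given as a Prop
   relation on distinct vertices. *)

Section Graphs.
Variable gT : finGroupType.

Definition is_clique (G : {set gT}) (adj : gT -> gT -> Prop) (S : {set gT}) :=
  S \subset G /\ forall x y, x \in S -> y \in S -> x != y -> adj x y.

Definition is_clique_number (G : {set gT}) (adj : gT -> gT -> Prop) (n : nat) :=
  (exists S, is_clique G adj S /\ #|S| = n) /\
  (forall S, is_clique G adj S -> #|S| <= n).

Definition is_max_subgroup_order (G : {set gT}) (P : {group gT} -> Prop) (n : nat) :=
  (exists H : {group gT}, H \subset G /\ P H /\ #|H| = n) /\
  (forall H : {group gT}, H \subset G -> P H -> #|H| <= n).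

Definition EPow_adj (x y : gT) : Prop := cyclic <<[set x; y]>>.

Definition Com_adj (x y : gT) : Prop := x * y = y * x.

(* A central extension of G: a (possibly infinite) group E with a surjective
   homomorphism pi : E -> G whose kernel Z is central in E; equivalently
   E/Z ≅ G with Z central. *)
Record central_ext (G : {set gT}) := CentralExt {
  ce_T : Type;
  ce_mul : ce_T -> ce_T -> ce_T;
  ce_one : ce_T;
  ce_inv : ce_T -> ce_T;
  ce_mulA : forall a b c, ce_mul a (ce_mul b c) = ce_mul (ce_mul a b) c;
  ce_mul1 : forall a, ce_mul ce_one a = a;
  ce_mulV : forall a, ce_mul (ce_inv a) a = ce_one;
  ce_pi : ce_T -> gT;
  ce_pi_mul : forall a b, ce_pi (ce_mul a b) = ce_pi a * ce_pi b;
  ce_pi_in : forall a, ce_pi a \in G;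
  ce_pi_surj : forall g, g \in G -> exists a, ce_pi a = g;
  ce_ker_central : forall z, ce_pi z = 1 -> forall a, ce_mul z a = ce_mul a z
}.

Definition DCom_adj (G : {set gT}) (x y : gT) : Prop :=
  forall E : central_ext G, forall a b : ce_T E,
    ce_pi a = x -> ce_pi b = y -> ce_mul a b = ce_mul b a.

Definition preimage_abelian_all_ext (G : {set gT}) (H : {set gT}) : Prop :=
  forall E : central_ext G, forall a b : ce_T E,
    ce_pi a \in H -> ce_pi b \in H -> ce_mul a b = ce_mul b a.

End Graphs.

From mathcomp Require Import all_boot all_fingroup all_solvable.
From Stdlib Require Import ClassicalEpsilon.
Set Implicit Arguments. Unset Strict Implicit. Unset Printing Implicit Defensive.
Local Open Scope group_scope.

(* In all three graphs the subgroups with the property are cliques, and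
   conversely every clique generates such a subgroup, so the clique number is
   the largest order of such a subgroup.  For Com this is immediate.  For DCom,
   an element of a central extension commuting with all preimages of a set
   commutes with all preimages of the subgroup it generates.  For EPow, a
   clique S is abelian, and for each prime p the p-parts of the elements of S
   lie in a cyclic p-group, hence in the largest of them; the product of these
   largest p-parts over all p generates a cyclic group containing S. *)

Section CliqueNumber.
Variable gT : finGroupType.

Lemma clique_number_max_subgroup_order (G : {group gT}) adj
    (P : {group gT} -> Prop) :
  (forall H : {group gT}, H \subset G -> P H -> is_clique G adj H) ->
  (forall S, is_clique G adj S -> P <<S>>%G) ->
  exists n, is_clique_number G adj n /\ is_max_subgroup_order G P n.
Proof.
move=> sub_clique gen_clique.
pose inG_P (H : {group gT}) :=
  (H \subset G) && excluded_middle_informative (P H).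
have inG_PP (H : {group gT}) : H \subset G -> P H -> inG_P H.
  by move=> sHG PH; rewrite /inG_P sHG; apply/sumboolP.
have P0 : inG_P <<set0>>%G.
  apply: inG_PP; first by rewrite gen_subG sub0set.
  by apply: gen_clique; split=> [|x y]; rewrite ?sub0set ?inE.
have [H0 /andP[sH0G /sumboolP PH0] maxH0] :=
  arg_maxnP (fun H : {group gT} => #|H|) P0.
have max_order (H : {group gT}) : H \subset G -> P H -> #|H| <= #|H0|.
  by move=> sHG PH; apply/maxH0/inG_PP.
exists #|H0|; split; split.
- by exists H0; split; first exact: sub_clique.
- move=> S cliqueS; apply: leq_trans (subset_leq_card (subset_gen S)) _.
  by apply: max_order (gen_clique _ cliqueS); rewrite gen_subG; case: cliqueS.
- by exists H0.
- exact: max_order.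
Qed.

End CliqueNumber.

Section PairwiseCyclic.
Variables (gT : finGroupType) (S : {set gT}).
Hypothesis S_pair_cyclic : {in S &, forall x y, cyclic <<[set x; y]>>}.

Lemma pair_cyclic_gen_abelian : abelian <<S>>.
Proof.
rewrite abelian_gen; apply/centsP => x xS y yS.
have /cyclic_abelian/centsP cxy := S_pair_cyclic yS xS.
by apply: cxy; apply: mem_gen; rewrite !inE eqxx ?orbT.
Qed.

Lemma constt_pair_cyclic x y (p : nat) : x \in S -> y \in S ->
  logn p #[x] <= logn p #[y] -> x.`_p \in <[y.`_p]>.
Proof.
move=> xS yS le_xy.
have constt_sub z : z \in [set x; y] -> <[z.`_p]> \subset <<[set x; y]>>.
  move=> zxy; rewrite cycle_subG; apply: subsetP (cycle_constt p z).
  by rewrite cycle_subG mem_gen.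
rewrite -cycle_subG -(cardSg_cyclic (S_pair_cyclic xS yS))
  ?constt_sub ?inE ?eqxx ?orbT //.
by rewrite -!orderE !order_constt !p_part dvdn_exp2l.
Qed.

Section CyclicCover.
Variable s0 : gT.
Hypothesis s0S : s0 \in S.

Definition max_constt (p : nat) := [arg max_(s > s0 in S) logn p #[s]].

Lemma max_consttP p :
  max_constt p \in S /\ {in S, forall x, logn p #[x] <= logn p #[max_constt p]}.
Proof. by rewrite /max_constt; case: arg_maxnP. Qed.

(* The product runs over all p < n; non-primes contribute x.`_p = 1. *)
Fixpoint cyclic_cover n :=
  if n is p.+1 then cyclic_cover p * (max_constt p).`_p else 1.

Lemma cyclic_coverP n :
  [/\ cyclic_cover n \in <<S>>, [pred q | q < n].-elt (cyclic_cover n)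
    & {in S, forall x p, p < n -> x.`_p \in <[cyclic_cover n]>}].
Proof.
elim: n => [|p [gS g_elt g_constt]] /=.
  by rewrite group1 /p_elt order1.
have [uS max_u] := max_consttP p; set w := (max_constt p).`_p.
have wS : w \in <<S>>.
  by apply: subsetP (cycle_constt p _); rewrite cycle_subG mem_gen.
have w_elt : p.-elt w := p_elt_constt p _.
have c_gw : commute (cyclic_cover p) w.
  exact: (centsP pair_cyclic_gen_abelian).
have co_gw : coprime #[cyclic_cover p] #[w].
  apply: (pnat_coprime g_elt); apply: sub_p_elt w_elt => q.
  by rewrite !inE => /eqP ->; rewrite ltnn.
split.
- exact: groupM.
- apply: p_eltM => //.
    by apply: sub_p_elt g_elt => q; rewrite !inE => /ltnW.
  by apply: sub_p_elt w_elt => q; rewrite !inE => /eqP->.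
- move=> x xS q; rewrite ltnS leq_eqVlt cycleM // => /predU1P[-> | ltqp].
    exact/(subsetP (mulG_subr _ _))/constt_pair_cyclic/max_u.
  exact/(subsetP (mulG_subl _ _))/g_constt.
Qed.

End CyclicCover.

Lemma pair_cyclic_gen_cyclic : cyclic <<S>>.
Proof.
have [-> | [s0 s0S]] := set_0Vmem S; first by rewrite gen0 cyclic1.
have [_ _ cover_constt] := cyclic_coverP s0S #|gT|.+1.
apply: cyclicS (cycle_cyclic _); rewrite gen_subG; apply/subsetP => x xS.
rewrite -(prod_constt x) big_nat group_prod // => p /andP[_ ltp].
by apply: cover_constt; rewrite // (leq_trans ltp) ?ltnS ?max_card.
Qed.

End PairwiseCyclic.

Section CentralExtension.
Variables (gT : finGroupType) (G : {set gT}) (E : central_ext G).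
Local Notation mul := (@ce_mul _ _ E).
Local Notation one := (@ce_one _ _ E).
Local Notation inv := (@ce_inv _ _ E).
Local Notation pi := (@ce_pi _ _ E).

Lemma ce_mulgV a : mul a (inv a) = one.
Proof.
rewrite -[LHS]ce_mul1 -[in X in mul X _](ce_mulV (inv a)).
by rewrite -ce_mulA [mul (inv a) _]ce_mulA ce_mulV ce_mul1 ce_mulV.
Qed.

Lemma ce_mulKVg a b : mul a (mul (inv a) b) = b.
Proof. by rewrite ce_mulA ce_mulgV ce_mul1. Qed.

Lemma ce_pi1 : pi one = 1.
Proof. by apply: (mulgI (pi one)); rewrite mulg1 -ce_pi_mul ce_mul1. Qed.

Lemma ce_piV a : pi (inv a) = (pi a)^-1.
Proof. by apply: (mulIg (pi a)); rewrite mulVg -ce_pi_mul ce_mulV ce_pi1. Qed.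

(* Preimages of the same element differ by a central factor. *)
Lemma ce_commute_eq_pi a b : pi a = pi b -> mul a b = mul b a.
Proof.
move=> eq_ab; have ker : pi (mul (inv a) b) = 1.
  by rewrite ce_pi_mul ce_piV eq_ab mulVg.
by rewrite -{1 2}(ce_mulKVg a b) -ce_mulA (ce_ker_central ker a).
Qed.

Lemma ce_commute_gen (S : {set gT}) c : S \subset G ->
    (forall e, pi e \in S -> mul c e = mul e c) ->
  forall e, pi e \in <<S>> -> mul c e = mul e c.
Proof.
move=> sSG cS e /gen_prodgP[n [f fS]].
elim: n f fS e => [|n IHn] f fS e.
  by rewrite big_ord0 => /ce_ker_central->.
rewrite big_ord_recl => pi_e.
have [a pi_a] := ce_pi_surj E (subsetP sSG _ (fS ord0)).
have c_a : mul c a = mul a c by apply: cS; rewrite pi_a.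
have c_rest : mul c (mul (inv a) e) = mul (mul (inv a) e) c.
  by apply: (IHn _ (fun i => fS _)); rewrite ce_pi_mul ce_piV pi_e pi_a mulKg.
by rewrite -(ce_mulKVg a e) ce_mulA c_a -ce_mulA c_rest ce_mulA.
Qed.

End CentralExtension.

Section CliquesGenerate.
Variables (gT : finGroupType) (G : {set gT}) (S : {set gT}).

Lemma EPow_clique_gen_cyclic : is_clique G (@EPow_adj gT) S -> cyclic <<S>>.
Proof.
case=> _ adjS; apply: pair_cyclic_gen_cyclic => x y xS yS.
by have [<- | /(adjS x y xS yS) //] := eqVneq x y; rewrite setUid cycle_cyclic.
Qed.

Lemma Com_clique_gen_abelian : is_clique G (@Com_adj gT) S -> abelian <<S>>.
Proof.
case=> _ adjS; rewrite abelian_gen; apply/centsP => x xS y yS.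
by have [<- | /(adjS x y xS yS) //] := eqVneq x y.
Qed.

Lemma DCom_clique_gen_preimage_abelian :
  is_clique G (DCom_adj G) S -> preimage_abelian_all_ext G <<S>>.
Proof.
case=> sSG adjS E a b Sa Sb.
have commS (c : ce_T E) :
    ce_pi c \in S -> forall e, ce_pi e \in S -> ce_mul c e = ce_mul e c.
  move=> Sc e Se; have [eq_ce | ne_ce] := eqVneq (ce_pi c) (ce_pi e).
    exact: ce_commute_eq_pi.
  exact: (adjS _ _ Sc Se ne_ce E c e).
apply: (ce_commute_gen sSG _ Sb) => e Se.
by apply/esym/(ce_commute_gen sSG (commS e Se)).
Qed.

End CliquesGenerate.

Theorem mainTheorem5 (gT : finGroupType) (G : {group gT}) :
  [/\ exists n, is_clique_number G (@EPow_adj gT) n /\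
                is_max_subgroup_order G (fun H => cyclic H) n,
      exists n, is_clique_number G (@Com_adj gT) n /\
                is_max_subgroup_order G (fun H => abelian H) n
    & exists n, is_clique_number G (DCom_adj G) n /\
                is_max_subgroup_order G (fun H => preimage_abelian_all_ext G H) n].
Proof.
split; apply: clique_number_max_subgroup_order.
- move=> H sHG cycH; split=> // x y xH yH _; apply: cyclicS cycH.
  by rewrite gen_subG subUset !sub1set xH yH.
- exact: EPow_clique_gen_cyclic.
- by move=> H sHG abH; split=> // x y xH yH _; apply: (centsP abH).
- exact: Com_clique_gen_abelian.
- move=> H sHG PH; split=> // x y xH yH _ E a b pi_a pi_b.
  by apply: PH; rewrite ?pi_a ?pi_b.
- exact: DCom_clique_gen_preimage_abelian.
Qed.
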